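(* Let $G'$ be a finite directed acyclic graph with distinct vertices $s'_1,\dots,s'_n$ (sources, with no incoming edges) and $t'_1,t'_2$ (terminals, with no outgoing edges) such that for every $i\in\{1,\dots,n\}$ and $j\in\{1,2\}$ there is a directed path from $s'_i$ to $t'_j$. Then there exists a subgraph $G^*$ of $G'$ such that (i) for every $i$ and $j$ there is exactly one directed path from $s'_i$ to $t'_j$ in $G^*$, and (ii) $G^*$ is minimal: for every edge $e$ of $G^*$, removing $e$ from $G^*$ leaves some pair $s'_i,t'_j$ with no directed path from $s'_i$ to $t'_j$.
   Context: ''Exactly one directed path'' means there is a directed path from $s'_i$ to $t'_j$ and no other, distinct, directed path between them (paths are sequences of edges). *)

(* A finite directed (multi)graph is given by a finite vertex
   type V, a finite edge type E and maps src dst : E -> V.  A subgraph is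
   represented by its edge set A : {set E}. *)
From mathcomp Require Import all_boot.
Set Implicit Arguments. Unset Strict Implicit. Unset Printing Implicit Defensive.

Fixpoint walk (V : eqType) (E : Type) (src dst : E -> V) (s t : V) (p : seq E)
  : bool :=
  match p with
  | [::] => s == t
  | e :: p' => (src e == s) && walk src dst (dst e) t p'
  end.

(* p is a directed path from s to t using only edges of the subgraph A
   (vertex-distinctness is automatic in an acyclic graph). *)
Definition dpath (V : eqType) (E : finType) (src dst : E -> V) (A : {set E})
  (s t : V) (p : seq E) : bool :=
  all (fun e => e \in A) p && walk src dst s t p.

Definition acyclic (V : eqType) (E : Type) (src dst : E -> V) : Prop :=
  forall (v : V) (p : seq E), walk src dst v v p -> p = [::].

(* Choose at every vertex v, for each terminal t_j reachable from v, a "next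
   hop": an out-edge of v whose head still reaches t_j.  The choice can be made
   consistent (an edge chosen at v whose head reaches t_k is also the hop
   towards t_k): if some out-edge reaches both terminals, use it for both.
   Following hops gives a path to t_j (acyclicity makes the set of reachable
   vertices shrink), and consistency makes it the only path made of hop edges.
   Keeping the hop edges reachable from the sources gives G*: every path from
   s_i is preserved, and each kept edge lies on the unique path from some s_i
   to some t_j, so it cannot be removed. *)
From mathcomp Require Import all_boot.
Set Implicit Arguments. Unset Strict Implicit. Unset Printing Implicit Defensive.

Lemma ord2_cover (j k l : 'I_2) : j != k -> (l == j) || (l == k).
Proof. by case: j k l => [[|[|//]] ?] [[|[|//]] ?] [[|[|//]] ?]. Qed.

Section Graph.

Variables (V E : finType) (src dst : E -> V).
Implicit Types (A B : {set E}) (e : E) (p q : seq E) (u v w : V).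

Lemma walk_cat u v w p q :
  walk src dst u v p -> walk src dst v w q -> walk src dst u w (p ++ q).
Proof.
elim: p u => [|e p IHp] u /=; first by move/eqP->.
by case/andP=> -> /IHp Wp /Wp ->.
Qed.

Lemma dpath_nil A v w : dpath src dst A v w [::] = (v == w).
Proof. by []. Qed.

Lemma dpath_cons A v w e p :
  dpath src dst A v w (e :: p) =
  [&& e \in A, src e == v & dpath src dst A (dst e) w p].
Proof. by rewrite /dpath /= -andbA; congr (_ && _); exact: andbCA. Qed.

Lemma dpath_cat A u v w p q :
  dpath src dst A u v p -> dpath src dst A v w q ->
  dpath src dst A u w (p ++ q).
Proof.
rewrite /dpath all_cat => /andP[-> Wp] /andP[-> Wq].
by rewrite (walk_cat Wp Wq).
Qed.

Lemma dpath_subset A B v w p :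
  A \subset B -> dpath src dst A v w p -> dpath src dst B v w p.
Proof.
rewrite /dpath => /subsetP sAB /andP[inA ->]; rewrite andbT.
by apply/allP=> e /(allP inA) /sAB.
Qed.

Definition step A : rel V :=
  fun u v => [exists e in A, (src e == u) && (dst e == v)].

Local Notation reach A := (connect (step A)).

Lemma reachP A v w :
  reflect (exists p, dpath src dst A v w p) (reach A v w).
Proof.
apply: (iffP idP) => [/connectP[q]|[p]].
  elim: q v => [|x q IHq] v /=.
    by move=> _ ->; exists [::]; rewrite dpath_nil.
  case/andP=> /existsP[e /and3P[eA /eqP srce /eqP dste]] qpath /(IHq x qpath).
  by case=> p pp; exists (e :: p); rewrite dpath_cons eA srce dste eqxx.
elim: p v => [|e p IHp] v; first by move/eqP->.
rewrite dpath_cons => /and3P[eA /eqP srce /IHp]; apply: connect_trans.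
by apply/connect1/existsP; exists e; rewrite eA srce !eqxx.
Qed.

Definition reachable_edges (I : finType) (s : I -> V) A : {set E} :=
  [set e in A | [exists i, reach A (s i) (src e)]].

Lemma reachable_edges_sub (I : finType) (s : I -> V) A :
  reachable_edges s A \subset A.
Proof. by apply/subsetP=> e; rewrite inE => /andP[]. Qed.

Lemma dpath_reachable_edges (I : finType) (s : I -> V) A i v w p :
  reach A (s i) v -> dpath src dst A v w p ->
  dpath src dst (reachable_edges s A) v w p.
Proof.
elim: p v => [//|e p IHp] v sv.
rewrite !dpath_cons => /and3P[eA /eqP srce ep]; rewrite srce eqxx /=.
have se : reach A (s i) (dst e).
  apply: connect_trans sv (connect1 _).
  by apply/existsP; exists e; rewrite eA srce !eqxx.
rewrite (IHp _ se ep) andbT inE eA; by apply/existsP; exists i; rewrite srce.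
Qed.

Hypothesis acyc : acyclic src dst.

Lemma dpath_cycle A v p : dpath src dst A v v p -> p = [::].
Proof. by case/andP=> _ /acyc. Qed.

Lemma reach_proper e :
  [set w | reach setT (dst e) w] \proper [set w | reach setT (src e) w].
Proof.
have srce : step setT (src e) (dst e).
  by apply/existsP; exists e; rewrite in_setT !eqxx.
apply/properP; split.
  by apply/subsetP=> w; rewrite !inE; apply: connect_trans (connect1 srce).
exists (src e); rewrite !inE ?connect0 //.
apply/negP=> /reachP[p pe].
have : dpath src dst setT (src e) (src e) (e :: p).
  by rewrite dpath_cons in_setT eqxx.
by move/dpath_cycle.
Qed.

Section Routing.

Variables (T : finType) (t : T -> V) (hop : V -> T -> option E).

Hypothesis hop_edge : forall v j e,
  hop v j = Some e -> src e = v /\ reach setT (dst e) (t j).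
Hypothesis hop_total : forall e j,
  reach setT (dst e) (t j) -> hop (src e) j != None.
Hypothesis hop_consistent : forall v j k e,
  hop v j = Some e -> reach setT (dst e) (t k) -> hop v k = Some e.

Definition hop_edges : {set E} := [set e | [exists j, hop (src e) j == Some e]].

Lemma mem_hop_edges e j : hop (src e) j = Some e -> e \in hop_edges.
Proof. by move=> hope; rewrite inE; apply/existsP; exists j; rewrite hope. Qed.

Lemma hop_edges_reach e : e \in hop_edges -> exists j, reach setT (dst e) (t j).
Proof. by rewrite inE => /existsP[j /eqP/hop_edge[_ ?]]; exists j. Qed.

Lemma hop_edges_hop e j :
  e \in hop_edges -> reach setT (dst e) (t j) -> hop (src e) j = Some e.
Proof. by rewrite inE => /existsP[k /eqP/hop_consistent]; apply. Qed.

Lemma hop_path v j :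
  reach setT v (t j) -> exists p, dpath src dst hop_edges v (t j) p.
Proof.
have [m] := ubnP #|[set w | reach setT v w]|; elim: m v => // m IHm v ltvm vt.
have [->|neq_vt] := eqVneq v (t j); first by exists [::]; rewrite dpath_nil.
case/reachP: vt => -[|e p]; first by rewrite dpath_nil (negPf neq_vt).
rewrite dpath_cons => /and3P[_ /eqP srce ep].
have /hop_total : reach setT (dst e) (t j) by apply/reachP; exists p.
rewrite srce; case hopv: (hop v j) => [f|] // _.
have [srcf ft] := hop_edge hopv.
have ltfm : #|[set w | reach setT (dst f) w]| < m.
  by apply: leq_trans (proper_card (reach_proper f)) _; rewrite srcf.
have [r fr] := IHm _ ltfm ft.
exists (f :: r); rewrite dpath_cons fr srcf eqxx !andbT.
by apply: (mem_hop_edges (j := j)); rewrite srcf.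
Qed.

Lemma hop_path_unique v j p q :
  dpath src dst hop_edges v (t j) p -> dpath src dst hop_edges v (t j) q ->
  p = q.
Proof.
elim: p q v => [|e p IHp] [|f q] v //.
- by move/eqP=> -> /dpath_cycle.
- by move=> /[swap] /eqP-> /dpath_cycle.
rewrite !dpath_cons => /and3P[eA /eqP srce ep] /and3P[fA /eqP srcf fq].
have reach_tail g r : dpath src dst hop_edges (dst g) (t j) r ->
    reach setT (dst g) (t j).
  by move=> gr; apply/reachP; exists r; apply: dpath_subset (subsetT _) gr.
have := hop_edges_hop fA (reach_tail _ _ fq).
rewrite srcf -srce (hop_edges_hop eA (reach_tail _ _ ep)) => -[ef].
by rewrite -ef in fq *; rewrite (IHp _ _ ep fq).
Qed.

Lemma hop_edges_minimal (I : finType) (s : I -> V) :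
  (forall i j, reach setT (s i) (t j)) ->
  exists Gs : {set E},
    (forall i j, exists! p, dpath src dst Gs (s i) (t j) p) /\
    (forall e, e \in Gs ->
       exists i j, forall p, ~~ dpath src dst (Gs :\ e) (s i) (t j) p).
Proof.
move=> st; pose Gs := reachable_edges s hop_edges.
have GsA := reachable_edges_sub s hop_edges.
exists Gs; split=> [i j|e].
  have [p sp] := hop_path (st i j).
  exists p; split; first exact: dpath_reachable_edges (connect0 _ _) sp.
  by move=> q /(dpath_subset GsA) /(hop_path_unique sp).
rewrite inE => /andP[eA /existsP[i /reachP[q sq]]].
have [j ej] := hop_edges_reach eA; exists i, j => p; apply/negP => sp.
have [r er] := hop_path ej.
have sqer : dpath src dst hop_edges (s i) (t j) (q ++ e :: r).
  by apply: (dpath_cat sq); rewrite dpath_cons eA eqxx.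
have sp' := dpath_subset (subset_trans (subD1set Gs e) GsA) sp.
case/andP: sp => /allP/(_ e); rewrite (hop_path_unique sp' sqer).
by rewrite mem_cat mem_head orbT !inE eqxx => /(_ isT).
Qed.

End Routing.

(* With three terminals a consistent choice of hops need not exist: consider
   three out-edges whose heads reach the terminal pairs {1,2}, {2,3}, {1,3}. *)
Section TwoTerminals.

Variable t : 'I_2 -> V.

Definition two_hop v j : option E :=
  if [pick e | (src e == v) && [forall k, reach setT (dst e) (t k)]] is Some e
  then Some e
  else [pick e | (src e == v) && reach setT (dst e) (t j)].

Lemma two_hop_edge v j e :
  two_hop v j = Some e -> src e = v /\ reach setT (dst e) (t j).
Proof.
rewrite /two_hop; case: pickP => [f /andP[/eqP srcf /forallP ft] [<-] //|_].
by case: pickP => // f /andP[/eqP srcf ft] [<-].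
Qed.

Lemma two_hop_total e j : reach setT (dst e) (t j) -> two_hop (src e) j != None.
Proof.
move=> et; rewrite /two_hop; case: pickP => [//|_].
by case: pickP => [//|/(_ e)]; rewrite eqxx et.
Qed.

Lemma two_hop_consistent v j k e :
  two_hop v j = Some e -> reach setT (dst e) (t k) -> two_hop v k = Some e.
Proof.
have [<- //|neq_jk] := eqVneq j k.
rewrite /two_hop; case: pickP => [//|none_both].
case: pickP => // f /andP[srcf fj] [<-] fk; case/negP: (none_both f).
by rewrite srcf; apply/forallP=> l; case/orP: (ord2_cover l neq_jk) => /eqP->.
Qed.

End TwoTerminals.

End Graph.

Theorem lemma2 (V E : finType) (src dst : E -> V) (n : nat)
  (s : 'I_n -> V) (t : 'I_2 -> V)
  (Hacyc : acyclic src dst)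
  (Hs_inj : injective s) (Ht_inj : injective t)
  (Hst : forall i j, s i != t j)
  (Hsrc : forall i e, dst e != s i)
  (Htgt : forall j e, src e != t j)
  (Hreach : forall i j, exists p, dpath src dst [set: E] (s i) (t j) p) :
  exists Gs : {set E},
    (forall i j, exists! p, dpath src dst Gs (s i) (t j) p) /\
    (forall e, e \in Gs ->
       exists i j, forall p, ~~ dpath src dst (Gs :\ e) (s i) (t j) p).
Proof.
apply: (hop_edges_minimal Hacyc (@two_hop_edge _ _ _ _ t)).
- exact: two_hop_total.
- exact: two_hop_consistent.
- by move=> i j; apply/reachP/Hreach.
Qed.
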